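(* Let $\Omega$ be a set of permutations. Then $$\mathcal{F}(\Omega)=\gamma\bigl(\mathrm{Modasc}[\Omega^{-1}]\bigr),\qquad\text{where } [\Omega^{-1}]=\bigcup_{\sigma\in\Omega}[\sigma^{-1}],$$ and $\mathrm{Modasc}[\Omega^{-1}]$ is the set of modified ascent sequences avoiding every Cayley permutation in $[\Omega^{-1}]$.
   Context: A Cayley permutation of length $n$ is a word of positive integers in which every integer from $1$ to its maximum occurs; $\mathrm{Cay}$ is the set of all of them. Containment $y\le x$: there are indices $i_1<\dots<i_k$ ($k$ the length of $y$) with $x(i_s)<x(i_t)\iff y(s)<y(t)$ and $x(i_s)=x(i_t)\iff y(s)=y(t)$; otherwise $x$ avoids $y$. For $x\in\mathrm{Cay}_n$, $\gamma(x)$ is the permutation obtained by sorting the pairs $(x(i),i)$ increasingly by first coordinate, ties by decreasing second coordinate, and reading the second coordinates; $\gamma(E)=\{\gamma(x):x\in E\}$. $x\sim y$ iff $\gamma(x)=\gamma(y)$, $[y]$ is the class of $y$. Modified ascent sequences: $\mathrm{Modasc}_0=\{\text{empty word}\}$, $\mathrm{Modasc}_1=\{1\}$; for $n\ge2$, $x\in\mathrm{Modasc}_n$ iff there is $v\in\mathrm{Modasc}_{n-1}$ with last letter $b$ such that either $x=va$ with $1\le a\le b$, or $x=\tilde va$ with $b<a\le2+\mathrm{asc}(v)$, where $\mathrm{asc}(v)=|\{i:v(i)<v(i+1)\}|$ and $\tilde v$ is $v$ with every entry $c\ge a$ increased by one. A permutation $\pi$ is Fishburn if there are no indices $i$ and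 $k>i+1$ with $\pi(i)<\pi(i+1)$ and $\pi(k)=\pi(i)-1$; $\mathcal{F}(\Omega)$ is the set of Fishburn permutations avoiding every pattern in $\Omega$. *)

(* words are seq nat with positive letters, positions 1-based
   in the paper, 0-based nth here. *)
From mathcomp Require Import all_boot.
Set Implicit Arguments. Unset Strict Implicit. Unset Printing Implicit Defensive.

Definition wmax (x : seq nat) : nat := foldr maxn 0 x.

Definition is_cay (x : seq nat) : bool :=
  all (fun a => 0 < a) x && all (fun k => k \in x) (iota 1 (wmax x)).

Definition is_perm (x : seq nat) : bool := perm_eq x (iota 1 (size x)).

Definition contains (x y : seq nat) : Prop :=
  exists idx : seq nat,
    [/\ size idx = size y, sorted ltn idx, all (fun i => i < size x) idx &
      forall s t, s < size y -> t < size y ->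
        (nth 0 x (nth 0 idx s) < nth 0 x (nth 0 idx t)) = (nth 0 y s < nth 0 y t)
        /\ (nth 0 x (nth 0 idx s) == nth 0 x (nth 0 idx t)) = (nth 0 y s == nth 0 y t)].

Definition avoids (x y : seq nat) : Prop := ~ contains x y.

Definition gamma_rel (p q : nat * nat) : bool :=
  (p.1 < q.1) || ((p.1 == q.1) && (q.2 <= p.2)).

Definition gamma (x : seq nat) : seq nat :=
  map snd (sort gamma_rel (zip x (iota 1 (size x)))).

Definition asc (v : seq nat) : nat :=
  count (fun p : nat * nat => p.1 < p.2) (zip v (behead v)).

Definition bump_from (a : nat) (v : seq nat) : seq nat :=
  map (fun c => if a <= c then c.+1 else c) v.

Inductive modasc : seq nat -> Prop :=
| modasc_nil : modasc [::]
| modasc_one : modasc [:: 1]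
| modasc_rep (v : seq nat) (a : nat) :
    modasc v -> 0 < size v -> 1 <= a -> a <= last 0 v -> modasc (rcons v a)
| modasc_new (v : seq nat) (a : nat) :
    modasc v -> 0 < size v -> last 0 v < a -> a <= (asc v).+2 ->
    modasc (rcons (bump_from a v) a).

Definition fishburn (p : seq nat) : Prop :=
  is_perm p /\
  forall i k, i.+1 < k -> k < size p -> nth 0 p i < nth 0 p i.+1 ->
    nth 0 p k <> (nth 0 p i).-1.

Definition perm_inv (s : seq nat) : seq nat :=
  map (fun j => (index j s).+1) (iota 1 (size s)).

Definition Fset (Omega : seq nat -> Prop) (p : seq nat) : Prop :=
  fishburn p /\ forall s, Omega s -> avoids p s.

Definition inv_classes (Omega : seq nat -> Prop) (y : seq nat) : Prop :=
  is_cay y /\ exists s, Omega s /\ gamma y = gamma (perm_inv s).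

Definition gamma_modasc_avoid (Omega : seq nat -> Prop) (p : seq nat) : Prop :=
  exists x, [/\ modasc x, (forall y, inv_classes Omega y -> avoids x y) & gamma x = p].

(** The word [gamma x] lists the positions of [x] ordered by letter, equal letters
    from right to left; so the position of [i.+1] in [gamma x] is the rank of [i] in
    that order.  Patterns are transported along [gamma]: if [x] contains [y] then
    [gamma x] contains [gamma y], and if [gamma x] contains a permutation [s] at some
    positions, the standardization of the subword of [x] read at the corresponding
    positions is a Cayley permutation [y] contained in [x] with [gamma y = s].  As
    [gamma (perm_inv s) = s], [x] avoids [[Omega^-1]] iff [gamma x] avoids [Omega].

    In a modified ascent sequence the tops of ascents are exactly the first
    occurrences of letters, which makes [gamma x] Fishburn.  Conversely, appending a
    letter [a] to [v] inserts the new maximum into [gamma v] at slot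
    [#{c in v | c < a}].  Deleting the maximum of a Fishburn permutation leaves a
    Fishburn permutation; by induction it is [gamma v], and the Fishburn condition at
    the ascent into the maximum forces the preceding entry to be the first occurrence
    of its letter in [v], so that the required slot is reached by an allowed letter. *)

From mathcomp Require Import all_boot zify.
Set Implicit Arguments. Unset Strict Implicit. Unset Printing Implicit Defensive.

Lemma sub_count_lt (T : eqType) (a b : pred T) (s : seq T) z :
  subpred a b -> z \in s -> b z -> ~~ a z -> count a s < count b s.
Proof.
move=> sub_ab + bz /negbTE az; elim: s => //= y s IHs.
rewrite inE => /orP[/eqP <- | zs]; first by rewrite az bz ltnS sub_count.
have := IHs zs; case ay: (a y); last by case: (b y) => /=; lia.
by rewrite sub_ab.
Qed.

Lemma index_sorted_count (T : eqType) (r : rel T) (s : seq T) e :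
  transitive r -> antisymmetric r -> sorted r s -> uniq s -> e \in s ->
  index e s = count (fun q => r q e && (q != e)) s.
Proof.
move=> r_tr r_anti; elim: s => //= h s IHs srt /andP[hs us] es.
have srt_s : sorted r s := path_sorted srt.
have r_h : all (r h) s by apply: order_path_min.
have [<- | ne_he] := eqVneq h e.
  rewrite /= andbF add0n; apply/esym/eqP; rewrite -leqn0 leqNgt -has_count.
  apply/hasPn => q qs; apply/negP => /andP[rqh /eqP[]].
  by apply: r_anti; rewrite rqh (allP r_h).
have e_s : e \in s by move: es; rewrite inE eq_sym (negbTE ne_he).
by rewrite /= andbT (allP r_h) // IHs.
Qed.

Definition gamma_lt (x : seq nat) (j i : nat) : bool :=
  (nth 0 x j < nth 0 x i) || ((nth 0 x j == nth 0 x i) && (i < j)).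

Definition rank (x : seq nat) (i : nat) : nat :=
  count (gamma_lt x ^~ i) (iota 0 (size x)).

Lemma gamma_lt_irr x i : gamma_lt x i i = false.
Proof. by rewrite /gamma_lt ltnn eqxx ltnn. Qed.

Lemma gamma_lt_trans x i j l : gamma_lt x i j -> gamma_lt x j l -> gamma_lt x i l.
Proof.
rewrite /gamma_lt => /orP[h1|/andP[/eqP e1 h1]] /orP[h2|/andP[/eqP e2 h2]];
  apply/orP; lia.
Qed.

Lemma gamma_lt_total x i j : i != j -> gamma_lt x i j || gamma_lt x j i.
Proof. by rewrite /gamma_lt neq_ltn; case: ltngtP => //= _; lia. Qed.

Lemma rank_lt x i : i < size x -> rank x i < size x.
Proof.
move=> lt_i; rewrite -[X in _ < X](size_iota 0) -count_predT.
by apply: (sub_count_lt (z := i)); rewrite ?mem_iota ?gamma_lt_irr.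
Qed.

Lemma rank_ltP x i j : i < size x -> j < size x ->
  (rank x j < rank x i) = gamma_lt x j i.
Proof.
move=> lt_i lt_j; apply/idP/idP => [lt_r | lt_ji].
  have [eq_ij | ne_ij] := eqVneq j i; first by rewrite eq_ij ltnn in lt_r.
  case/orP: (gamma_lt_total x ne_ij) => // lt_ij.
  suff: rank x i < rank x j by lia.
  apply: (sub_count_lt (z := i)); rewrite ?mem_iota ?gamma_lt_irr //.
  by move=> l /= /gamma_lt_trans; apply.
apply: (sub_count_lt (z := j)); rewrite ?mem_iota ?gamma_lt_irr //.
by move=> l /= /gamma_lt_trans; apply.
Qed.

Lemma gamma_rel_trans : transitive gamma_rel.
Proof.
move=> [a b] [c d] [e f]; rewrite /gamma_rel /=.
by move=> /orP[h1|/andP[/eqP e1 h1]] /orP[h2|/andP[/eqP e2 h2]]; apply/orP; lia.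
Qed.

Lemma gamma_rel_total : total gamma_rel.
Proof. move=> [a b] [c d]; rewrite /gamma_rel /=; case: ltngtP => //= _; lia. Qed.

Lemma gamma_rel_anti : antisymmetric gamma_rel.
Proof.
move=> [a b] [c d]; rewrite /gamma_rel /= => /andP[].
by move=> /orP[h1|/andP[/eqP e1 h1]] /orP[h2|/andP[/eqP e2 h2]]; try lia; congr pair; lia.
Qed.

Lemma zip_iota_nth (x : seq nat) :
  zip x (iota 1 (size x)) = map (fun j => (nth 0 x j, j.+1)) (iota 0 (size x)).
Proof.
apply: (@eq_from_nth _ (0, 0)); first by rewrite size_zip size_map !size_iota minnn.
move=> i; rewrite size_zip size_iota minnn => lt_i.
by rewrite nth_zip ?size_iota // (nth_map 0) ?size_iota // !nth_iota.
Qed.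

Lemma size_gamma x : size (gamma x) = size x.
Proof. by rewrite /gamma size_map size_sort size_zip size_iota minnn. Qed.

Lemma gamma_perm x : perm_eq (gamma x) (iota 1 (size x)).
Proof.
rewrite /gamma -[X in perm_eq _ X](@unzip2_zip _ _ x) ?size_iota //.
by apply: perm_map; rewrite perm_sort.
Qed.

Lemma gamma_uniq x : uniq (gamma x).
Proof. by rewrite (perm_uniq (gamma_perm x)) iota_uniq. Qed.

Lemma nth_gamma_rank x i : i < size x -> nth 0 (gamma x) (rank x i) = i.+1.
Proof.
move=> lt_i; set Z := zip x (iota 1 (size x)); set S := sort gamma_rel Z.
have pS : perm_eq S Z by rewrite perm_sort.
have uS : uniq S.
  rewrite (perm_uniq pS) /Z zip_iota_nth map_inj_in_uniq ?iota_uniq //.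
  by move=> a b _ _ [_ ->].
have sS : sorted gamma_rel S by apply/sort_sorted/gamma_rel_total.
have xiS : (nth 0 x i, i.+1) \in S.
  by rewrite (perm_mem pS) /Z zip_iota_nth; apply: map_f; rewrite mem_iota.
suff -> : rank x i = index (nth 0 x i, i.+1) S.
  by rewrite /gamma -/Z -/S (nth_map (0, 0)) ?index_mem // nth_index.
rewrite (index_sorted_count gamma_rel_trans gamma_rel_anti) // (permP pS).
rewrite /Z zip_iota_nth count_map; apply: eq_in_count => j.
rewrite mem_iota /gamma_lt /gamma_rel /= xpair_eqE eqSS => _.
case: (ltngtP (nth 0 x j) (nth 0 x i)) => //= _; rewrite ?andbF //.
by rewrite ltnS andbC eq_sym -ltn_neqAle.
Qed.

Lemma rank_nth_gamma x t : t < size x ->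
  [/\ 0 < nth 0 (gamma x) t, (nth 0 (gamma x) t).-1 < size x &
      rank x (nth 0 (gamma x) t).-1 = t].
Proof.
move=> lt_t; have : nth 0 (gamma x) t \in iota 1 (size x).
  by rewrite -(perm_mem (gamma_perm x)) mem_nth ?size_gamma.
rewrite mem_iota => /andP[pos lt]; have lt' : (nth 0 (gamma x) t).-1 < size x by lia.
split => //; apply/eqP; rewrite -(nth_uniq 0 _ _ (gamma_uniq x)) ?size_gamma ?rank_lt //.
by rewrite nth_gamma_rank // prednK.
Qed.

Lemma gamma_rankE x q : size q = size x ->
  (forall i, i < size x -> nth 0 q (rank x i) = i.+1) -> gamma x = q.
Proof.
move=> sz_q q_rank; apply: (@eq_from_nth _ 0); first by rewrite size_gamma.
rewrite size_gamma => t lt_t; have [pos lt rk] := rank_nth_gamma lt_t.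
by rewrite -[in RHS]rk q_rank // prednK.
Qed.

Definition insert_at k (e : nat) (q : seq nat) := take k q ++ e :: drop k q.

Lemma size_insert_at k e q : k <= size q -> size (insert_at k e q) = (size q).+1.
Proof. by move=> le_kq; rewrite size_cat /= size_takel // size_drop; lia. Qed.

Lemma nth_insert_at k e q t : k <= size q ->
  nth 0 (insert_at k e q) t =
    if t < k then nth 0 q t else if t == k then e else nth 0 q t.-1.
Proof.
move=> le_kq; rewrite /insert_at nth_cat size_takel //.
case: ltnP => [lt_tk | le_kt]; first by rewrite nth_take.
have [-> | ne_tk] := eqVneq t k; first by rewrite subnn.
by rewrite -[t - k](@prednK) /= ?nth_drop; [congr nth | ]; lia.
Qed.

Lemma count_nth (P : pred nat) (v : seq nat) :
  count P v = count (fun j => P (nth 0 v j)) (iota 0 (size v)).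
Proof. by rewrite -{1}(mkseq_nth 0 v) /mkseq count_map. Qed.

Lemma rank_rcons v a i : i < size v ->
  rank (rcons v a) i = rank v i + (a <= nth 0 v i).
Proof.
move=> lt_i; rewrite /rank size_rcons -addn1 iotaD count_cat /= addn0 add0n.
congr addn; last by rewrite /gamma_lt !nth_rcons ltnn eqxx lt_i andbT orbC -leq_eqVlt.
apply: eq_in_count => j; rewrite mem_iota => /andP[_ lt_j].
by rewrite /gamma_lt !nth_rcons lt_j lt_i.
Qed.

Lemma rank_rcons_last v a : rank (rcons v a) (size v) = count (fun c => c < a) v.
Proof.
rewrite /rank size_rcons -addn1 iotaD count_cat /= gamma_lt_irr !addn0.
rewrite [RHS]count_nth; apply: eq_in_count => j; rewrite mem_iota add0n => /andP[_ lt_j].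
by rewrite /gamma_lt !nth_rcons lt_j ltnn eqxx (ltnNge (size v)) (ltnW lt_j) andbF orbF.
Qed.

Lemma count_lt_leq_rank v a i : i < size v ->
  (count (fun c => c < a) v <= rank v i) = (a <= nth 0 v i).
Proof.
move=> lt_i; rewrite count_nth /rank; case: (leqP a (nth 0 v i)) => [le_a | lt_a].
  by apply: sub_count => j /= lt_ja; rewrite /gamma_lt; apply/orP; left; lia.
apply/negbTE; rewrite -ltnNge; apply: (sub_count_lt (z := i)) => //=.
- by move=> j /orP[|/andP[/eqP ->]] //; lia.
- by rewrite mem_iota.
- by rewrite gamma_lt_irr.
Qed.

Lemma gamma_rcons v a :
  gamma (rcons v a) = insert_at (count (fun c => c < a) v) (size v).+1 (gamma v).
Proof.
have le_cnt : count (fun c => c < a) v <= size (gamma v) by rewrite size_gamma count_size.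
apply: gamma_rankE; first by rewrite size_insert_at // size_gamma size_rcons.
move=> i; rewrite size_rcons ltnS leq_eqVlt => /orP[/eqP -> | lt_i].
  by rewrite rank_rcons_last nth_insert_at // ltnn eqxx.
rewrite rank_rcons // nth_insert_at //; have := count_lt_leq_rank a lt_i.
case: (leqP a (nth 0 v i)) => [le_a | lt_a] le_cnt_rank.
  by rewrite addn1 !ifF ?nth_gamma_rank //; lia.
by rewrite addn0 ifT ?nth_gamma_rank //; lia.
Qed.

Lemma bump_fromE a v : bump_from a v = map (bump a) v.
Proof. by apply: eq_map => c; rewrite /bump; case: leqP. Qed.

Lemma ltn_bump2 h i j : (bump h i < bump h j) = (i < j).
Proof. by rewrite !ltnNge leq_bump2. Qed.

Lemma eqn_bump2 h i j : (bump h i == bump h j) = (i == j).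
Proof. exact/inj_eq/(can_inj (bumpK h)). Qed.

Lemma nth_bump_from a v j : j < size v -> nth 0 (bump_from a v) j = bump a (nth 0 v j).
Proof. by move=> lt_j; rewrite bump_fromE (nth_map 0). Qed.

Lemma size_bump_from a v : size (bump_from a v) = size v.
Proof. exact: size_map. Qed.

Lemma rank_bump_from a v : rank (bump_from a v) =1 rank v.
Proof.
move=> i; rewrite /rank size_bump_from; apply: eq_in_count => j.
rewrite mem_iota add0n => /andP[_ lt_j]; rewrite /gamma_lt.
case: (ltnP i (size v)) => [lt_i | le_i].
  by rewrite !nth_bump_from // ltn_bump2 eqn_bump2.
have -> : (i < j) = false by lia.
rewrite !andbF !orbF (nth_default 0 le_i) (@nth_default _ 0 (bump_from a v) i).
  by rewrite !ltn0.
by rewrite size_bump_from.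
Qed.

Lemma gamma_bump_from a v : gamma (bump_from a v) = gamma v.
Proof.
apply: gamma_rankE; first by rewrite size_gamma size_bump_from.
by move=> i; rewrite size_bump_from rank_bump_from; apply: nth_gamma_rank.
Qed.

Lemma count_lt_iota c m n : count (fun x => x < c) (iota m n) = minn (c - m) n.
Proof. by elim: n m => [|n IHn] m /=; rewrite ?minn0 // IHn; case: ltnP; lia. Qed.

Lemma perm_invE s : perm_inv s = map (fun b => (index b.+1 s).+1) (iota 0 (size s)).
Proof. by rewrite /perm_inv -[1]/(1 + 0) iotaDl -map_comp. Qed.

Lemma size_perm_inv s : size (perm_inv s) = size s.
Proof. by rewrite size_map size_iota. Qed.

Lemma nth_perm_inv s i : i < size s -> nth 0 (perm_inv s) i = (index i.+1 s).+1.
Proof. by move=> lt_i; rewrite perm_invE (nth_map 0) ?size_iota // nth_iota. Qed.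

Lemma perm_inv_perm s : is_perm s -> is_perm (perm_inv s).
Proof.
rewrite /is_perm size_perm_inv => ps.
have memS j : (j \in s) = (j \in iota 1 (size s)) by rewrite (perm_mem ps).
have uniq_inv : uniq (perm_inv s).
  rewrite map_inj_in_uniq ?iota_uniq // => a b a_s b_s [] eq_ab.
  by rewrite -(nth_index 0 (s := s) (x := a)) ?memS // eq_ab nth_index ?memS.
have sub_inv : {subset perm_inv s <= iota 1 (size s)}.
  move=> _ /mapP[j j_s ->]; rewrite mem_iota add1n !ltnS index_mem memS.
  by rewrite j_s.
have [|_ eq_mem] := uniq_min_size uniq_inv sub_inv; first by rewrite size_iota size_perm_inv.
by apply: uniq_perm; rewrite ?iota_uniq.
Qed.

Lemma rank_uniq x i : uniq x -> i < size x ->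
  rank x i = count (fun c => c < nth 0 x i) x.
Proof.
move=> uniq_x lt_i; rewrite /rank [RHS]count_nth; apply: eq_in_count => j.
rewrite mem_iota add0n => /andP[_ lt_j]; rewrite /gamma_lt nth_uniq //.
by case: eqVneq => [-> | _]; rewrite ?ltnn ?andbF ?orbF.
Qed.

Lemma gamma_perm_inv s : is_perm s -> gamma (perm_inv s) = s.
Proof.
move=> ps; have inv_ps := perm_inv_perm ps.
have memS j : (j \in s) = (j \in iota 1 (size s)) by rewrite (perm_mem ps).
apply: gamma_rankE => [|i]; rewrite size_perm_inv // => lt_i.
have idx_lt : index i.+1 s < size s by rewrite index_mem memS mem_iota; lia.
rewrite rank_uniq ?size_perm_inv ?(perm_uniq inv_ps) ?iota_uniq //.
rewrite (permP inv_ps) size_perm_inv count_lt_iota nth_perm_inv // subn1 /=.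
by rewrite (minn_idPl (ltnW idx_lt)) nth_index // memS mem_iota; lia.
Qed.

Lemma ltn_sorted_nth (L : seq nat) a b : sorted ltn L -> a < size L -> b < size L ->
  (nth 0 L a < nth 0 L b) = (a < b).
Proof.
move=> srt lt_a lt_b; have mono := sorted_ltn_nth ltn_trans 0 srt.
case: (ltngtP a b) => [lt_ab | lt_ba | ->]; last by rewrite !ltnn.
- exact: mono.
- by apply/negbTE; rewrite -leqNgt ltnW // mono.
Qed.

Lemma eqn_sorted_nth (L : seq nat) a b : sorted ltn L -> a < size L -> b < size L ->
  (nth 0 L a == nth 0 L b) = (a == b).
Proof. by move=> srt lt_a lt_b; rewrite nth_uniq // (sorted_uniq ltn_trans ltnn srt). Qed.

Definition std_letters (w : seq nat) := sort leq (undup w).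

Definition std (w : seq nat) := map (fun c => (index c (std_letters w)).+1) w.

Lemma std_letters_sorted w : sorted ltn (std_letters w).
Proof.
rewrite ltn_sorted_uniq_leq sort_uniq undup_uniq sort_sorted //.
by move=> a b; apply: leq_total.
Qed.

Lemma mem_std_letters w : std_letters w =i w.
Proof. by move=> c; rewrite mem_sort mem_undup. Qed.

Lemma std_ltn w c d : c \in w -> d \in w ->
  ((index c (std_letters w)).+1 < (index d (std_letters w)).+1) = (c < d).
Proof.
rewrite -(mem_std_letters w c) -(mem_std_letters w d) => c_w d_w.
have srt := std_letters_sorted w.
rewrite ltnS -[c in RHS](nth_index 0 c_w) -[d in RHS](nth_index 0 d_w).
by rewrite ltn_sorted_nth ?index_mem.
Qed.

Lemma std_eqn w c d : c \in w -> d \in w ->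
  ((index c (std_letters w)).+1 == (index d (std_letters w)).+1) = (c == d).
Proof.
rewrite -(mem_std_letters w c) -(mem_std_letters w d) => c_w d_w.
have srt := std_letters_sorted w.
rewrite eqSS -[c in RHS](nth_index 0 c_w) -[d in RHS](nth_index 0 d_w).
by rewrite eqn_sorted_nth ?index_mem.
Qed.

Lemma wmax_leq (y : seq nat) m : {in y, forall c, c <= m} -> wmax y <= m.
Proof.
elim: y => //= c y IHy le_m; rewrite geq_max le_m ?mem_head // IHy // => d d_y.
by rewrite le_m // inE d_y orbT.
Qed.

Lemma std_cay w : is_cay (std w).
Proof.
apply/andP; split; first by apply/allP => _ /mapP[d _ ->].
apply/allP => m; rewrite mem_iota add1n ltnS => /andP[pos_m le_m].
have lt_m : m.-1 < size (std_letters w).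
  suff : wmax (std w) <= size (std_letters w) by lia.
  by apply: wmax_leq => _ /mapP[d d_w ->]; rewrite index_mem mem_std_letters.
apply/mapP; exists (nth 0 (std_letters w) m.-1).
  by rewrite -mem_std_letters mem_nth.
by rewrite index_uniq ?sort_uniq ?undup_uniq // prednK.
Qed.

Definition occurs_at (x y I : seq nat) : Prop :=
  [/\ size I = size y, sorted ltn I, all (fun i => i < size x) I &
      forall s t, s < size y -> t < size y ->
        (nth 0 x (nth 0 I s) < nth 0 x (nth 0 I t)) = (nth 0 y s < nth 0 y t)
        /\ (nth 0 x (nth 0 I s) == nth 0 x (nth 0 I t)) = (nth 0 y s == nth 0 y t)].

Lemma occurs_at_gamma_lt x y I a b : occurs_at x y I -> a < size y -> b < size y ->
  gamma_lt y a b = gamma_lt x (nth 0 I a) (nth 0 I b).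
Proof.
case=> sz_I srt _ iso lt_a lt_b; have [iso_lt iso_eq] := iso a b lt_a lt_b.
by rewrite /gamma_lt iso_lt iso_eq (ltn_sorted_nth srt) ?sz_I.
Qed.

Lemma sorted_ltn_mkseq (f : nat -> nat) k :
  (forall t, t.+1 < k -> f t < f t.+1) -> sorted ltn (mkseq f k).
Proof.
move=> f_incr; apply/(sortedP 0) => t; rewrite size_mkseq => lt_t.
by rewrite !nth_mkseq //; [apply: f_incr | apply: ltnW].
Qed.

Lemma contains_gamma x y : contains x y -> contains (gamma x) (gamma y).
Proof.
case=> I occ; have [sz_I srt all_I iso] := occ.
have I_lt a : a < size y -> nth 0 I a < size x.
  by move=> lt_a; apply: (allP all_I); rewrite mem_nth ?sz_I.
pose pos t := (nth 0 (gamma y) t).-1.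
exists (mkseq (fun t => rank x (nth 0 I (pos t))) (size y)); split.
- by rewrite size_mkseq size_gamma.
- apply: sorted_ltn_mkseq => t lt_t.
  have [_ lt1 rk1] := rank_nth_gamma (ltnW lt_t).
  have [_ lt2 rk2] := rank_nth_gamma lt_t.
  rewrite rank_ltP ?I_lt // -(occurs_at_gamma_lt occ) // -rank_ltP //.
  by rewrite /pos rk1 rk2.
- apply/allP => r /mapP[t]; rewrite mem_iota size_gamma => /andP[_ lt_t] ->.
  by have [_ lt _] := rank_nth_gamma lt_t; rewrite rank_lt ?I_lt.
move=> t t'; rewrite size_gamma => lt_t lt_t'; rewrite !nth_mkseq //.
have [pos1 lt1 rk1] := rank_nth_gamma lt_t.
have [pos2 lt2 rk2] := rank_nth_gamma lt_t'.
rewrite !nth_gamma_rank ?I_lt // -(prednK pos1) -(prednK pos2) !ltnS !eqSS.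
by rewrite ltn_sorted_nth ?eqn_sorted_nth ?sz_I.
Qed.

Lemma occurs_at_std x I : sorted ltn I -> all (fun i => i < size x) I ->
  occurs_at x (std (map (nth 0 x) I)) I.
Proof.
move=> srt all_I; rewrite /occurs_at /std !size_map; split=> // a b lt_a lt_b.
have in_w c : c < size I -> nth 0 x (nth 0 I c) \in map (nth 0 x) I.
  by move=> lt_c; rewrite map_f ?mem_nth.
by rewrite !(nth_map 0) ?size_map // std_ltn ?std_eqn ?in_w.
Qed.

Lemma rank_std x I a : sorted ltn I -> all (fun i => i < size x) I -> a < size I ->
  rank (std (map (nth 0 x) I)) a =
    count (fun b => rank x (nth 0 I b) < rank x (nth 0 I a)) (iota 0 (size I)).
Proof.
move=> srt all_I lt_a; have occ := occurs_at_std srt all_I.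
have I_lt b : b < size I -> nth 0 I b < size x by move=> lt_b; apply/(allP all_I)/mem_nth.
rewrite /rank /std !size_map; apply: eq_in_count => b; rewrite mem_iota => /andP[_ lt_b].
by rewrite (occurs_at_gamma_lt occ) ?size_map // rank_ltP ?I_lt.
Qed.

Lemma count_index_lt s i : is_perm s -> i <= size s ->
  count (fun b => index b.+1 s < i) (iota 0 (size s)) = i.
Proof.
move=> ps le_i; have := permP (perm_inv_perm ps) (fun c => c < i.+1).
by rewrite perm_invE count_map size_map size_iota count_lt_iota subn1 /= (minn_idPl le_i).
Qed.

Lemma gamma_contains x s : is_perm s -> contains (gamma x) s ->
  exists2 y, is_cay y & gamma y = s /\ contains x y.
Proof.
move=> ps [J [sz_J srt_J all_J iso]].
have memS j : (j \in s) = (0 < j <= size s) by rewrite (perm_mem ps) mem_iota add1n ltnS.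
have J_lt t : t < size s -> nth 0 J t < size x.
  by move=> lt_t; rewrite -(size_gamma x); apply/(allP all_J)/mem_nth; rewrite sz_J.
pose P t := (nth 0 (gamma x) (nth 0 J t)).-1.
have PP t : t < size s -> [/\ 0 < nth 0 (gamma x) (nth 0 J t), P t < size x &
                            rank x (P t) = nth 0 J t].
  by move=> lt_t; apply/rank_nth_gamma/J_lt.
pose tinv a := index a.+1 s.
have tinvP a : a < size s -> tinv a < size s /\ nth 0 s (tinv a) = a.+1.
  by move=> lt_a; rewrite index_mem nth_index memS.
pose I := mkseq (P \o tinv) (size s).
have sz_I : size I = size s by rewrite size_mkseq.
have srt_I : sorted ltn I.
  apply: sorted_ltn_mkseq => a lt_a /=.
  have [[lt1 s1] [lt2 s2]] := (tinvP a (ltnW lt_a), tinvP a.+1 lt_a).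
  have [pos1 _ _] := PP _ lt1; have [pos2 _ _] := PP _ lt2.
  have [iso_lt _] := iso _ _ lt1 lt2; rewrite s1 s2 ltnSn in iso_lt.
  by rewrite /P -ltnS !prednK.
have all_I : all (fun i => i < size x) I.
  apply/allP => i /mapP[a]; rewrite mem_iota => /andP[_ lt_a] ->.
  by have [lt _] := tinvP a lt_a; have [] := PP _ lt.
exists (std (map (nth 0 x) I)); first exact: std_cay.
split; last by exists I; apply: occurs_at_std.
have sz_y : size (std (map (nth 0 x) I)) = size s by rewrite /std !size_map ?size_iota.
apply: gamma_rankE; rewrite sz_y // => a lt_a.
have [lt_ta s_ta] := tinvP a lt_a; rewrite rank_std ?sz_I // -[in RHS]s_ta.
congr nth; rewrite -[in RHS](count_index_lt ps (ltnW lt_ta)).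
apply: eq_in_count => b; rewrite mem_iota => /andP[_ lt_b] /=.
have [lt_tb _] := tinvP b lt_b; have [_ _ rk_a] := PP _ lt_ta; have [_ _ rk_b] := PP _ lt_tb.
by rewrite !nth_mkseq //= rk_a rk_b ltn_sorted_nth ?sz_J.
Qed.

Lemma avoid_inv_classesE (Omega : seq nat -> Prop) x :
  (forall s, Omega s -> is_perm s) ->
  (forall y, inv_classes Omega y -> avoids x y) <->
  (forall s, Omega s -> avoids (gamma x) s).
Proof.
move=> perm_Omega; split=> [avoid_x s Os gx_s | avoid_gx y [cay_y [s [Os gy]]] x_y].
  have [y cay_y [gy x_y]] := gamma_contains (perm_Omega s Os) gx_s.
  by apply: (avoid_x y) x_y; split=> //; exists s; rewrite gy gamma_perm_inv ?perm_Omega.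
apply: (avoid_gx s Os); rewrite -(gamma_perm_inv (perm_Omega s Os)) -gy.
exact: contains_gamma.
Qed.

Definition first_occ (x : seq nat) (j : nat) : bool := nth 0 x j \notin take j x.

Definition ascents_first_occ (x : seq nat) : Prop :=
  forall j, 0 < j < size x -> (nth 0 x j.-1 < nth 0 x j) = first_occ x j.

Lemma first_occ_neq x i j : j < size x -> first_occ x j -> i < j ->
  nth 0 x i != nth 0 x j.
Proof.
move=> lt_j fo_j lt_ij; apply: contraNneq fo_j => <-.
by rewrite -(nth_take 0 lt_ij) mem_nth // size_takel // ltnW.
Qed.

Lemma asc_cons2 h h' t : asc [:: h, h' & t] = (h < h') + asc (h' :: t).
Proof. by []. Qed.

Lemma asc_rcons v a : 0 < size v -> asc (rcons v a) = asc v + (last 0 v < a).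
Proof.
case: v => // h t _; elim: t h => [|h' t IHt] h; first by rewrite /asc /= addn0.
by rewrite rcons_cons rcons_cons asc_cons2 -rcons_cons IHt asc_cons2 addnA.
Qed.

Lemma asc_bump_from a v : asc (bump_from a v) = asc v.
Proof.
rewrite bump_fromE; elim: v => [|h [|h' t] IHt] //.
by rewrite [map _ _]/= asc_cons2 -map_cons IHt ltn_bump2.
Qed.

Lemma last_bump_from a v : last 0 v < a -> last 0 (bump_from a v) = last 0 v.
Proof.
move=> lt_last; have bump0 : bump a 0 = 0 by rewrite /bump leqNgt (leq_ltn_trans _ lt_last).
by rewrite bump_fromE -[in LHS]bump0 last_map /bump leqNgt lt_last.
Qed.

Lemma mem_bump_from a v c :
  (c \in bump_from a v) = (c != a) && (unbump a c \in v).
Proof.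
rewrite bump_fromE; have [-> | ne_ca] := eqVneq c a.
  by apply/negbTE/negP => /mapP[d _ /eqP]; rewrite (negbTE (neq_bump a d)).
by rewrite -[c in LHS](unbumpK (h := a)) ?inE // mem_map //; apply: can_inj (bumpK a).
Qed.

Lemma mem_last_nonnil (v : seq nat) : 0 < size v -> last 0 v \in v.
Proof. by move=> pos_v; rewrite -nth_last mem_nth ?ltn_predL. Qed.

Lemma modasc_letters x : modasc x -> 0 < size x ->
  forall c, (c \in x) = (0 < c <= (asc x).+1).
Proof.
elim=> {x} // [_ c | v a _ IHv pos_v pos_a le_a _ c | v a _ IHv pos_v lt_a le_a _ c].
- by rewrite inE; case: c => [|[]].
- have := IHv pos_v (last 0 v); rewrite mem_last_nonnil // => /esym last_v.
  rewrite asc_rcons // (ltnNge (last 0 v)) le_a addn0 mem_rcons inE IHv //.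
  by case: eqVneq => [-> | //]; lia.
rewrite asc_rcons ?size_bump_from // last_bump_from // lt_a addn1 asc_bump_from.
rewrite mem_rcons inE mem_bump_from IHv // /unbump.
by case: eqVneq => [-> | ne_ca] /=; lia.
Qed.

Lemma ascents_first_occ_rcons u z : 0 < size u -> ascents_first_occ u ->
  (last 0 u < z) = (z \notin u) -> ascents_first_occ (rcons u z).
Proof.
move=> pos_u asc_u new_z j; rewrite size_rcons ltnS => /andP[pos_j le_j].
have lt_pj : j.-1 < size u by lia.
rewrite /first_occ -cats1 takel_cat // !nth_cat lt_pj.
have [lt_j | ge_j] := ltnP j (size u); first by rewrite asc_u ?pos_j.
have -> : j = size u by lia.
by rewrite subnn take_size nth_last.
Qed.

Lemma ascents_first_occ_bump_from a v :
  ascents_first_occ v -> ascents_first_occ (bump_from a v).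
Proof.
move=> asc_v j; rewrite size_bump_from => /andP[pos_j lt_j].
rewrite /first_occ bump_fromE -map_take !(nth_map 0) ?ltn_bump2 ?mem_map; try lia.
  by rewrite asc_v ?pos_j.
exact: can_inj (bumpK a).
Qed.

Lemma modasc_ascents_first_occ x : modasc x -> ascents_first_occ x.
Proof.
elim=> {x} [||v a mv IHv pos_v pos_a le_a | v a mv IHv pos_v lt_a le_a].
- by move=> j; rewrite ltn0 andbF.
- by case=> [|[|j]].
- apply: ascents_first_occ_rcons => //; rewrite (ltnNge (last 0 v)) le_a.
  have /esym := modasc_letters mv pos_v (last 0 v).
  rewrite mem_last_nonnil // => /andP[_ le_last].
  by rewrite modasc_letters // pos_a (leq_trans le_a).
apply: ascents_first_occ_rcons; rewrite ?size_bump_from //.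
  exact: ascents_first_occ_bump_from.
by rewrite last_bump_from // lt_a mem_bump_from eqxx.
Qed.

Lemma gamma_is_perm x : is_perm (gamma x).
Proof. by rewrite /is_perm size_gamma gamma_perm. Qed.

Lemma fishburn_gamma x : ascents_first_occ x -> fishburn (gamma x).
Proof.
move=> asc_x; split=> [|t k lt_tk]; first exact: gamma_is_perm.
rewrite size_gamma => lt_k lt_t eq_k.
have lt_t1 : t.+1 < size x := ltn_trans lt_tk lt_k.
have [pos1 lt1 rk1] := rank_nth_gamma (ltnW lt_t1).
have [pos2 lt2 rk2] := rank_nth_gamma lt_t1.
have [pos3 lt3 rk3] := rank_nth_gamma lt_k.
set j := (nth 0 (gamma x) t).-1 in lt1 rk1.
set j' := (nth 0 (gamma x) t.+1).-1 in lt2 rk2.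
have pos_j : 0 < j by rewrite /j -eq_k; lia.
have m_j : (nth 0 (gamma x) k).-1 = j.-1 by rewrite eq_k.
rewrite m_j in lt3 rk3.
have lt_jj' : j < j' by rewrite /j /j'; lia.
have x_jj' : nth 0 x j < nth 0 x j'.
  have : rank x j < rank x j' by rewrite rk1 rk2.
  rewrite rank_ltP // /gamma_lt.
  by rewrite (ltnNge j') (ltnW lt_jj') andbF orbF.
have x_jm : nth 0 x j <= nth 0 x j.-1.
  have : rank x j < rank x j.-1 by rewrite rk1 rk3 ltnW.
  by rewrite rank_ltP // /gamma_lt => /orP[/ltnW | /andP[/eqP -> _]].
have first_j : first_occ x j.
  apply/negP => /(nthP 0)[i]; rewrite size_takel ?(ltnW lt1) // => lt_ij.
  rewrite nth_take // => eq_ij.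
  have : rank x j < rank x i < rank x j'.
    by rewrite !rank_ltP ?(ltn_trans lt_ij) // /gamma_lt eq_ij eqxx lt_ij x_jj' orbT.
  by rewrite rk1 rk2; lia.
by move: x_jm; rewrite leqNgt asc_x ?first_j // pos_j lt1.
Qed.

Lemma modasc_insert v a : modasc v -> 0 < size v -> 0 < a <= (asc v).+2 ->
  exists2 x, modasc x & gamma x = insert_at (count (fun c => c < a) v) (size v).+1 (gamma v).
Proof.
move=> mv pos_v /andP[pos_a le_a]; have [le_last | lt_last] := leqP a (last 0 v).
  by exists (rcons v a); [apply: modasc_rep | rewrite gamma_rcons].
exists (rcons (bump_from a v) a); first exact: modasc_new.
rewrite gamma_rcons gamma_bump_from size_bump_from bump_fromE count_map.
by congr insert_at; apply: eq_count => c /=; rewrite /bump; case: leqP; lia.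
Qed.

Lemma count_lt_first_occ v j : j < size v -> first_occ v j ->
  count (fun c => c < (nth 0 v j).+1) v = (rank v j).+1.
Proof.
move=> lt_j first_j; set s := iota 0 (size v).
have one_j : count (pred1 j) s = 1 by rewrite count_uniq_mem ?iota_uniq // mem_iota lt_j.
have disj : count (predI (gamma_lt v ^~ j) (pred1 j)) s = 0.
  rewrite (eq_count (a2 := pred0)) ?count_pred0 // => i /=.
  by case: (eqVneq i j) => [->|]; rewrite ?gamma_lt_irr ?andbF.
have := count_predUI (gamma_lt v ^~ j) (pred1 j) s.
rewrite disj one_j addn0 addn1 /rank -/s => <-; rewrite count_nth -/s.
apply: eq_in_count => i; rewrite mem_iota add0n => /andP[_ lt_i] /=.
rewrite ltnS /gamma_lt; case: (ltngtP i j) => [lt_ij | lt_ji | ->]; rewrite ?eqxx ?orbT //.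
- by rewrite orbF leq_eqVlt orbC (negbTE (first_occ_neq lt_j first_j lt_ij)).
- by rewrite orbF andbT orbC -leq_eqVlt.
- by rewrite leqnn.
Qed.

Lemma first_occ_fishburn_insert v k : ascents_first_occ v -> 0 < k < size v ->
  fishburn (insert_at k (size v).+1 (gamma v)) -> first_occ v (nth 0 (gamma v) k.-1).-1.
Proof.
set p := insert_at k (size v).+1 (gamma v).
move=> asc_v /andP[pos_k lt_k] [_ fish_p].
have le_k : k <= size (gamma v) by rewrite size_gamma ltnW.
have [pos_qk lt_j rk_j] := rank_nth_gamma (leq_ltn_trans (leq_pred k) lt_k).
set j := (nth 0 (gamma v) k.-1).-1 in lt_j rk_j *.
have q_j : nth 0 (gamma v) k.-1 = j.+1 by rewrite prednK.
have [-> | pos_j] := posnP j; first by rewrite /first_occ take0.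
set r := rank v j.-1.
have lt_r : r < size v by rewrite rank_lt //; lia.
have q_r : nth 0 (gamma v) r = j by rewrite nth_gamma_rank ?prednK //; lia.
(* Otherwise [j = p (k.-1) - 1] would occur in [p] after the ascent [p (k.-1) < p k]. *)
have lt_rk : r < k.-1.
  case: (ltngtP r k.-1) => // [lt_kr | eq_rk]; last by move: q_r; rewrite eq_rk q_j; lia.
  have p_k1 : nth 0 p k.-1 = j.+1 by rewrite nth_insert_at // ltn_predL pos_k.
  have p_k : nth 0 p k = (size v).+1 by rewrite nth_insert_at // ltnn eqxx.
  have p_r : nth 0 p r.+1 = j by rewrite nth_insert_at // !ifF //; lia.
  exfalso; apply: (fish_p k.-1 r.+1);
    rewrite ?size_insert_at ?size_gamma ?prednK ?p_k1 ?p_k ?p_r //; lia.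
rewrite -asc_v; last by rewrite pos_j.
have : rank v j.-1 < rank v j by rewrite rk_j.
rewrite rank_ltP //; try lia.
by rewrite /gamma_lt (ltnNge j) leq_pred andbF orbF.
Qed.

Lemma modasc_insert_slot v k : modasc v -> 0 < size v -> k <= size v ->
  fishburn (insert_at k (size v).+1 (gamma v)) ->
  exists2 a, 0 < a <= (asc v).+2 & count (fun c => c < a) v = k.
Proof.
move=> mv pos_v le_k fish_p; have letters := modasc_letters mv pos_v.
have [-> | pos_k] := posnP k.
  exists 1 => //; apply/eqP; rewrite -leqn0 leqNgt -has_count.
  by apply/hasPn => c; rewrite letters; lia.
have [-> | lt_k] := eqVneq k (size v).
  exists (asc v).+2; first by rewrite /= leqnn.
  apply/eqP; rewrite -all_count.
  by apply/allP => c; rewrite letters; lia.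
have range_k : 0 < k < size v by rewrite pos_k ltn_neqAle lt_k.
have lt_k1 : k.-1 < size v by lia.
have [_ lt_j rk_j] := rank_nth_gamma lt_k1.
have first_j := first_occ_fishburn_insert (modasc_ascents_first_occ mv) range_k fish_p.
exists (nth 0 v (nth 0 (gamma v) k.-1).-1).+1.
  by have := letters (nth 0 v (nth 0 (gamma v) k.-1).-1); rewrite mem_nth //; lia.
by rewrite count_lt_first_occ // rk_j prednK.
Qed.

Lemma nth_rem (s : seq nat) x i :
  nth 0 (rem x s) i = nth 0 s (if i < index x s then i else i.+1).
Proof.
rewrite remE nth_cat size_takel ?index_size //.
by case: ltnP => [lt_i | le_i]; rewrite ?nth_take // nth_drop; congr nth; lia.
Qed.

Lemma insert_at_rem (s : seq nat) x : x \in s -> insert_at (index x s) x (rem x s) = s.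
Proof.
move=> x_s; have le_idx := index_size x s.
rewrite /insert_at remE takel_cat ?size_takel // take_oversize ?size_takel //.
rewrite drop_cat size_takel //.
by rewrite ltnn subnn drop0 -drop_index // cat_take_drop.
Qed.

Lemma fishburn_rem_max p n : fishburn p -> size p = n.+1 -> fishburn (rem n.+1 p).
Proof.
case=> perm_p fish_p sz_p.
have memP j : (j \in p) = (0 < j <= n.+1) by rewrite (perm_mem perm_p) mem_iota sz_p add1n ltnS.
have N_p : n.+1 \in p by rewrite memP leqnn.
set k := index n.+1 p.
have lt_N i : i < n.+1 -> i != k -> nth 0 p i < n.+1.
  move=> lt_i ne_ik; have := memP (nth 0 p i); rewrite mem_nth ?sz_p // => /esym/andP[_].
  rewrite ltn_neqAle => ->; rewrite andbT; apply: contra ne_ik => /eqP eq_N.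
  by rewrite /k -eq_N index_uniq ?sz_p // (perm_uniq perm_p) iota_uniq.
split.
  rewrite /is_perm size_rem // sz_p /= -(perm_cons n.+1).
  rewrite perm_sym; apply: perm_trans (perm_to_rem N_p); rewrite perm_sym.
  by apply: perm_trans perm_p _; rewrite sz_p -(addn1 n) iotaD perm_catC add1n addn1.
move=> i m lt_im; rewrite size_rem // sz_p /= => lt_m; rewrite !nth_rem -/k.
have [lt_i1k | le_ki1] := ltnP i.+1 k.
  rewrite (ltn_trans (ltnSn i) lt_i1k); case: ifP => _; apply: fish_p; rewrite ?sz_p; lia.
rewrite (ltnNge m) (leq_trans le_ki1 (ltnW lt_im)) /=.
have [lt_ik | le_ki] := ltnP i k.
  have eq_k : i.+1 = k by lia.
  move=> _; apply: fish_p; rewrite ?sz_p ?eq_k //; first lia.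
  by rewrite [nth 0 p k]nth_index // lt_N //; lia.
by move=> lt_p; apply: fish_p; rewrite ?sz_p //; lia.
Qed.

Lemma fishburn_size1 p : fishburn p -> size p = 1 -> p = [:: 1].
Proof.
case: p => [|c []] // [perm_p _] _; have := perm_mem perm_p c.
by rewrite mem_head inE => /esym/eqP ->.
Qed.

Lemma fishburn_gamma_modasc p : fishburn p -> exists2 x, modasc x & gamma x = p.
Proof.
move: {2}(size p) (erefl (size p)) => n; elim: n p => [|n IHn] p sz_p fish_p.
  by exists [::]; [exact: modasc_nil | move/size0nil: sz_p ->].
have [n0 | pos_n] := posnP n.
  by exists [:: 1]; [exact: modasc_one | rewrite (fishburn_size1 fish_p) // sz_p n0].
have fish_q := fishburn_rem_max fish_p sz_p.
have N_p : n.+1 \in p by rewrite (perm_mem fish_p.1) mem_iota sz_p add1n ltnSn.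
have sz_q : size (rem n.+1 p) = n by rewrite size_rem // sz_p.
have [v mv gv] := IHn _ sz_q fish_q.
have sz_v : size v = n by rewrite -sz_q -gv size_gamma.
have le_k : index n.+1 p <= size v by rewrite sz_v -ltnS; move: N_p; rewrite -index_mem sz_p.
have p_ins : insert_at (index n.+1 p) (size v).+1 (gamma v) = p.
  by rewrite gv sz_v insert_at_rem.
have pos_v : 0 < size v by rewrite sz_v.
have fish_ins : fishburn (insert_at (index n.+1 p) (size v).+1 (gamma v)) by rewrite p_ins.
have [a range_a cnt_a] := modasc_insert_slot mv pos_v le_k fish_ins.
have [x mx gx] := modasc_insert mv pos_v range_a.
by exists x; rewrite // gx cnt_a.
Qed.

Unset Implicit Arguments.

Theorem theorem5p3 (Omega : seq nat -> Prop) :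
  (forall s, Omega s -> is_perm s) ->
  forall p : seq nat, Fset Omega p <-> gamma_modasc_avoid Omega p.
Proof.
move=> perm_Omega p; split=> [[fish_p avoid_p] | [x [mx avoid_x <-]]].
  have [x mx gx] := fishburn_gamma_modasc fish_p.
  by exists x; split=> //; apply/(avoid_inv_classesE _ perm_Omega); rewrite gx.
split; last exact/(avoid_inv_classesE _ perm_Omega).
exact/fishburn_gamma/modasc_ascents_first_occ.
Qed.
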